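(* For every strategy profile $s$ with $S_0(s)\vee S_1(s)$: $\ \mathsf{SAcBes}(s)\vee\mathsf{SBcAes}(s)\iff\mathsf{SPE}(s)$.
   Context: Let $P=\{A,B\}$ and $\mathrm{Choice}=\{d,r\}$; a payoff function is $f:P\to\mathbb{R}$. Strategy profiles are elements of the final coalgebra of $X\mapsto\mathbb{R}^P+P\times\mathrm{Choice}\times X\times X$ (finite or infinite trees $\langle f\rangle$ or $\langle p,c,s_d,s_r\rangle$, equality being bisimilarity). The payoff $\widehat{s}$ is the partial function given by $\widehat{\langle f\rangle}=f$, $\widehat{\langle p,d,s_d,s_r\rangle}=\widehat{s_d}$, $\widehat{\langle p,r,s_d,s_r\rangle}=\widehat{s_r}$. Convergence $\downarrow$: least predicate with $\downarrow(s)$ iff $s=\langle f\rangle$, or $s=\langle p,d,s_d,s_r\rangle\wedge\downarrow(s_d)$, or $s=\langle p,r,s_d,s_r\rangle\wedge\downarrow(s_r)$. Strong convergence $\Downarrow$: greatest predicate with $\Downarrow(s)$ iff $s=\langle f\rangle$, or $s=\langle p,c,s_d,s_r\rangle$ with $\downarrow(s),\Downarrow(s_d),\Downarrow(s_r)$. For a predicate $\Phi$, $\Box\Phi$ is the greatest predicate such that $\Box\Phi(s)$ iff $\Phi(s)$ and, whenever $s=\langle p,c,s_d,s_r\rangle$, $\Box\Phi(s_d)$ and $\Box\Phi(s_r)$. $\mathsf{PE}(s)$ holds iff $\Downarrow(s)$ and (if $s=\langle p,d,s_d,s_r\rangle$ then $\widehat{s_d}(p)\ge\widehat{s_r}(p)$)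 and (if $s=\langle p,r,s_d,s_r\rangle$ then $\widehat{s_r}(p)\ge\widehat{s_d}(p)$); $\mathsf{SPE}=\Box\,\mathsf{PE}$. Let $f_{0,1}=(A\mapsto0,B\mapsto1)$, $f_{1,0}=(A\mapsto1,B\mapsto0)$. $S_0,S_1$ are the greatest predicates with $S_0(s)$ iff $s=\langle A,c,\langle f_{0,1}\rangle,s'\rangle$ with $S_1(s')$, and $S_1(s)$ iff $s=\langle B,c,\langle f_{1,0}\rangle,s'\rangle$ with $S_0(s')$ (these are the profiles of the infinite alternating ''$0,1$-game''). $\mathsf{AcBes}$ is the least predicate such that $\mathsf{AcBes}(s)$ holds iff: whenever $s=\langle p,c,\langle f\rangle,s'\rangle$, then ($p=A$, $f=f_{0,1}$, $c=r$, $\mathsf{AcBes}(s')$) or ($p=B$, $f=f_{1,0}$, and ($c=d$ or $\mathsf{AcBes}(s')$)). $\mathsf{BcAes}$ is the least predicate such that $\mathsf{BcAes}(s)$ holds iff: whenever $s=\langle p,c,\langle f\rangle,s'\rangle$, then ($p=B$, $f=f_{1,0}$, $c=r$, $\mathsf{BcAes}(s')$) or ($p=A$, $f=f_{0,1}$, and ($c=d$ or $\mathsf{BcAes}(s')$)). $\mathsf{SAcBes}=\Box\,\mathsf{AcBes}$, $\mathsf{SBcAes}=\Box\,\mathsf{BcAes}$. *)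

From Stdlib Require Import Reals.
Open Scope R_scope.

Inductive Agent : Type := A | B.
Inductive Choice : Type := d | r.

Definition Payoff : Type := Agent -> R.

CoInductive StratProf : Type :=
| leaf : Payoff -> StratProf
| node : Agent -> Choice -> StratProf -> StratProf -> StratProf.

(* The partial payoff function  s^ , as a (functional) relation:
   payoff s f  means  s^ is defined at s and equals f. *)
Inductive payoff : StratProf -> Payoff -> Prop :=
| payoff_leaf : forall f, payoff (leaf f) f
| payoff_d : forall p sd sr f, payoff sd f -> payoff (node p d sd sr) f
| payoff_r : forall p sd sr f, payoff sr f -> payoff (node p r sd sr) f.

Inductive Conv : StratProf -> Prop :=
| conv_leaf : forall f, Conv (leaf f)
| conv_d : forall p sd sr, Conv sd -> Conv (node p d sd sr)
| conv_r : forall p sd sr, Conv sr -> Conv (node p r sd sr).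

CoInductive SConv : StratProf -> Prop :=
| sconv_leaf : forall f, SConv (leaf f)
| sconv_node : forall p c sd sr,
    Conv (node p c sd sr) -> SConv sd -> SConv sr -> SConv (node p c sd sr).

CoInductive Always (Phi : StratProf -> Prop) : StratProf -> Prop :=
| always_leaf : forall f, Phi (leaf f) -> Always Phi (leaf f)
| always_node : forall p c sd sr,
    Phi (node p c sd sr) -> Always Phi sd -> Always Phi sr ->
    Always Phi (node p c sd sr).

Definition PE (s : StratProf) : Prop :=
  SConv s /\
  match s with
  | leaf _ => True
  | node p d sd sr =>
      forall fd fr, payoff sd fd -> payoff sr fr -> fd p >= fr p
  | node p r sd sr =>
      forall fd fr, payoff sd fd -> payoff sr fr -> fr p >= fd p
  end.

Definition SPE : StratProf -> Prop := Always PE.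

Definition f01 : Payoff := fun a => match a with A => 0 | B => 1 end.
Definition f10 : Payoff := fun a => match a with A => 1 | B => 0 end.

CoInductive S0 : StratProf -> Prop :=
| S0_intro : forall c s', S1 s' -> S0 (node A c (leaf f01) s')
with S1 : StratProf -> Prop :=
| S1_intro : forall c s', S0 s' -> S1 (node B c (leaf f10) s').

Definition is_leaf (s : StratProf) : Prop :=
  match s with leaf _ => True | node _ _ _ _ => False end.

(* "A continues, B eventually stops" (least predicate).  The first two
   constructors cover the vacuous case where s is not of the form
   <p, c, <f>, s'>. *)
Inductive AcBes : StratProf -> Prop :=
| acbes_leaf : forall f, AcBes (leaf f)
| acbes_notleaf : forall p c t s', ~ is_leaf t -> AcBes (node p c t s')
| acbes_A : forall s', AcBes s' -> AcBes (node A r (leaf f01) s')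
| acbes_Bd : forall s', AcBes (node B d (leaf f10) s')
| acbes_Bc : forall c s', AcBes s' -> AcBes (node B c (leaf f10) s').

Inductive BcAes : StratProf -> Prop :=
| bcaes_leaf : forall f, BcAes (leaf f)
| bcaes_notleaf : forall p c t s', ~ is_leaf t -> BcAes (node p c t s')
| bcaes_B : forall s', BcAes s' -> BcAes (node B r (leaf f10) s')
| bcaes_Ad : forall s', BcAes (node A d (leaf f01) s')
| bcaes_Ac : forall c s', BcAes s' -> BcAes (node A c (leaf f01) s').

Definition SAcBes : StratProf -> Prop := Always AcBes.
Definition SBcAes : StratProf -> Prop := Always BcAes.

From Stdlib Require Import Reals Lra.
Open Scope R_scope.

(* In the 0,1-game the player who stops gets 0 and the other gets 1, so every
   outcome is f01 or f10, and on a profile of the game AcBes (resp. BcAes) just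
   says that the outcome is f10 (resp. f01).  A choice to continue is then always
   a best reply, and a choice to stop is one exactly when the continuation also
   ends with the same player stopping, i.e. has the same outcome.  Hence SAcBes
   (resp. SBcAes) means "subgame perfect with outcome f10 (resp. f01)", and the
   theorem follows because a subgame perfect profile converges to one of the two
   outcomes. *)

Lemma payoff_Conv s f : payoff s f -> Conv s.
Proof. induction 1; constructor; assumption. Qed.

Lemma Conv_payoff s : Conv s -> exists f, payoff s f.
Proof.
  induction 1 as [f | p sd sr _ [f Hf] | p sd sr _ [f Hf]];
    eexists; constructor; eassumption.
Qed.

Lemma payoff_functional s f g : payoff s f -> payoff s g -> f = g.
Proof.
  intros Hf; revert g; induction Hf; intros g Hg; inversion Hg; subst; auto.
Qed.

Lemma SConv_Conv s : SConv s -> Conv s.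
Proof. destruct 1; [constructor | assumption]. Qed.

Lemma Always_Conv_SConv : forall s, Always Conv s -> SConv s.
Proof.
  cofix CIH; destruct 1.
  - constructor.
  - constructor; auto.
Qed.

Lemma Always_inv Phi p c sd sr : Always Phi (node p c sd sr) ->
  Phi (node p c sd sr) /\ Always Phi sd /\ Always Phi sr.
Proof. inversion 1; auto. Qed.

Lemma Always_inv_root Phi s : Always Phi s -> Phi s.
Proof. destruct 1; assumption. Qed.

Lemma SPE_payoff s : SPE s -> exists f, payoff s f.
Proof.
  intros HS; apply Conv_payoff, SConv_Conv.
  destruct HS as [? [HC _] | ? ? ? ? [HC _] _ _]; exact HC.
Qed.

Definition stop_payoff (p : Agent) : Payoff :=
  match p with A => f01 | B => f10 end.

Lemma f01_neq_f10 : f01 <> f10.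
Proof. intros E; generalize (f_equal (fun f => f A) E); simpl; lra. Qed.

Lemma stop_payoff_inj p q : stop_payoff p = stop_payoff q -> p = q.
Proof.
  destruct p, q; simpl; intros E; try reflexivity;
    exfalso; apply f01_neq_f10; congruence.
Qed.

Lemma stop_payoff_self p : stop_payoff p p = 0.
Proof. destruct p; reflexivity. Qed.

Lemma outcome01_nonneg f p : f = f01 \/ f = f10 -> 0 <= f p.
Proof. intros [-> | ->]; destruct p; simpl; lra. Qed.

Lemma outcome01_nonpos f p : f = f01 \/ f = f10 -> f p <= 0 -> f = stop_payoff p.
Proof. intros [-> | ->]; destruct p; simpl; intros; first [reflexivity | lra]. Qed.

Definition game01 (s : StratProf) : Prop := S0 s \/ S1 s.

Lemma game01_node s : game01 s ->
  exists p c s', s = node p c (leaf (stop_payoff p)) s' /\ game01 s'.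
Proof.
  intros [H | H]; inversion H; subst; [exists A | exists B];
    do 2 eexists; (split; [reflexivity | unfold game01; auto]).
Qed.

Lemma Always_game01_coind (Phi Q : StratProf -> Prop) :
  (forall f, Phi (leaf f)) ->
  (forall p c s', game01 (node p c (leaf (stop_payoff p)) s') -> game01 s' ->
     Q (node p c (leaf (stop_payoff p)) s') ->
     Phi (node p c (leaf (stop_payoff p)) s') /\ Q s') ->
  forall s, game01 s -> Q s -> Always Phi s.
Proof.
  intros Hleaf Hnode; cofix CIH; intros s Hg HQ.
  destruct (game01_node s Hg) as (p & c & s' & -> & Hg').
  destruct (Hnode p c s' Hg Hg' HQ) as [HPhi HQ'].
  constructor; auto; constructor; apply Hleaf.
Qed.

Lemma game01_outcome s f : game01 s -> payoff s f -> f = f01 \/ f = f10.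
Proof.
  intros Hg Hf; revert Hg; induction Hf as [f | p sd sr f Hf _ | p sd sr f _ IH];
    intros Hg; destruct (game01_node _ Hg) as (p' & c & s' & E & Hg');
    inversion E; subst.
  - inversion Hf; destruct p'; auto.
  - auto.
Qed.

Lemma game01_AcBes s : game01 s -> (AcBes s <-> payoff s f10).
Proof.
  intros Hg; split.
  - intros H; revert Hg; induction H as [| p c t s' Ht | s' _ IH | s' | c s' _ IH];
      intros Hg; destruct (game01_node _ Hg) as (p' & c' & s'' & E & Hg');
      inversion E; subst.
    + contradiction Ht; exact I.
    + apply payoff_r; auto.
    + repeat constructor.
    + destruct c'; [repeat constructor | apply payoff_r; auto].
  - intros Hp; remember f10 as g eqn:Eg; revert Hg.
    induction Hp as [f | p sd sr f Hf _ | p sd sr f _ IH]; intros Hg;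
      destruct (game01_node _ Hg) as (p' & c' & s'' & E & Hg');
      inversion E; subst.
    + inversion Hf; subst.
      replace p' with B by (apply stop_payoff_inj; simpl; congruence).
      apply acbes_Bd.
    + destruct p'; [apply acbes_A | apply acbes_Bc]; auto.
Qed.

Lemma game01_BcAes s : game01 s -> (BcAes s <-> payoff s f01).
Proof.
  intros Hg; split.
  - intros H; revert Hg; induction H as [| p c t s' Ht | s' _ IH | s' | c s' _ IH];
      intros Hg; destruct (game01_node _ Hg) as (p' & c' & s'' & E & Hg');
      inversion E; subst.
    + contradiction Ht; exact I.
    + apply payoff_r; auto.
    + repeat constructor.
    + destruct c'; [repeat constructor | apply payoff_r; auto].
  - intros Hp; remember f01 as g eqn:Eg; revert Hg.
    induction Hp as [f | p sd sr f Hf _ | p sd sr f _ IH]; intros Hg;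
      destruct (game01_node _ Hg) as (p' & c' & s'' & E & Hg');
      inversion E; subst.
    + inversion Hf; subst.
      replace p' with A by (apply stop_payoff_inj; simpl; congruence).
      apply bcaes_Ad.
    + destruct p'; [apply bcaes_Ac | apply bcaes_B]; auto.
Qed.

Section OutcomePredicate.

Variable Phi : StratProf -> Prop.
Variable g : Payoff.
Hypothesis Phi_leaf : forall f, Phi (leaf f).
Hypothesis game01_Phi : forall s, game01 s -> Phi s <-> payoff s g.

Lemma Always_outcome_SConv s : game01 s -> Always Phi s -> SConv s.
Proof.
  intros Hg HA; apply Always_Conv_SConv.
  revert s Hg HA; apply Always_game01_coind; [constructor |].
  intros p c s' Hg _ HA; apply Always_inv in HA as (HPhi & _ & HA').
  split; [| exact HA'].
  apply payoff_Conv with g, game01_Phi; assumption.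
Qed.

Lemma Always_outcome_SPE s : game01 s -> Always Phi s -> SPE s.
Proof.
  apply Always_game01_coind; [split; constructor |].
  intros p c s' Hg Hg' HA.
  assert (HS := Always_outcome_SConv _ Hg HA).
  apply Always_inv in HA as (HPhi & _ & HA'); split; [split; [exact HS |] | exact HA'].
  apply game01_Phi in HPhi; [| exact Hg].
  assert (Hs' : payoff s' g) by (apply game01_Phi, (Always_inv_root _ _ HA'); exact Hg').
  destruct c; simpl; intros fd fr Hd Hr; inversion Hd; subst;
    rewrite (payoff_functional _ _ _ Hr Hs').
  - inversion HPhi as [| ? ? ? ? Hleaf | ]; inversion Hleaf; subst; lra.
  - rewrite stop_payoff_self; apply Rle_ge, outcome01_nonneg, (game01_outcome s'); assumption.
Qed.

Lemma SPE_outcome_Always s : game01 s -> SPE s -> payoff s g -> Always Phi s.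
Proof.
  intros Hg HS Hp.
  apply Always_game01_coind with (Q := fun t => SPE t /\ payoff t g);
    [exact Phi_leaf | | exact Hg | split; assumption].
  clear s Hg HS Hp; intros p c s' Hg Hg' [HS Hp].
  apply Always_inv in HS as ([_ Hroot] & _ & HS').
  split; [apply game01_Phi; assumption | split; [exact HS' |]].
  destruct c; inversion Hp as [| ? ? ? ? Hleaf | ? ? ? ? Hs']; subst; [| exact Hs'].
  inversion Hleaf; subst.
  destruct (SPE_payoff _ HS') as [f Hf].
  replace (stop_payoff p) with f; [exact Hf |].
  apply outcome01_nonpos; [apply (game01_outcome s'); assumption |].
  apply Rge_le; rewrite <- (stop_payoff_self p); exact (Hroot _ _ (payoff_leaf _) Hf).
Qed.

End OutcomePredicate.

Theorem mainTheorem12 (s : StratProf) :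
  S0 s \/ S1 s -> (SAcBes s \/ SBcAes s <-> SPE s).
Proof.
  intros Hg; split.
  - intros [H | H].
    + exact (Always_outcome_SPE AcBes f10 game01_AcBes s Hg H).
    + exact (Always_outcome_SPE BcAes f01 game01_BcAes s Hg H).
  - intros HS; destruct (SPE_payoff s HS) as [f Hf].
    destruct (game01_outcome s f Hg Hf) as [-> | ->].
    + right; exact (SPE_outcome_Always BcAes f01 bcaes_leaf game01_BcAes s Hg HS Hf).
    + left; exact (SPE_outcome_Always AcBes f10 acbes_leaf game01_AcBes s Hg HS Hf).
Qed.
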